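(* Let $N\ge3$. One has $\pi_Y\circ\mathcal F=\mathcal F_Y\circ\pi_{\widetilde Y}$ as maps $\mathbb{Q}(\mu_N)\langle\langle\widetilde X\rangle\rangle\to\mathbb{Q}(\mu_N)\langle\langle Y\rangle\rangle$, and $\mathbf p\circ\mathcal F=\mathcal F\circ\widetilde{\mathbf q}$ as maps $\mathbb{Q}(\mu_N)\langle\langle\widetilde X\rangle\rangle\to\mathbb{Q}(\mu_N)\langle\langle X\rangle\rangle$.
   Context: $\zeta_N=\exp(2\pi i/N)$, $\mu_N$ the complex $N$-th roots of unity, $\iota:\{1,\dots,N\}\to\mathbb{Z}/N\mathbb{Z}$ the residue-class bijection. $K\langle\langle\mathcal L\rangle\rangle$: noncommutative formal power series over $\mathcal L$. Alphabets $X=\{x_0\}\cup\{x_\zeta:\zeta\in\mu_N\}$, $Y=\{y_{k,\zeta}:k\ge1,\zeta\in\mu_N\}$, $\widetilde X=\{\tilde x\}\cup\{\tilde x_\alpha:\alpha\in\mathbb{Z}/N\mathbb{Z}\}$, $\widetilde Y=\{\tilde y_{k,\alpha}:k\ge1,\alpha\in\mathbb{Z}/N\mathbb{Z}\}$, with $y_{k,\zeta}\equiv x_0^{k-1}x_\zeta$ and $\tilde y_{k,\alpha}\equiv\tilde x^{k-1}\tilde x_\alpha$. Using the decompositions $K\langle\langle X\rangle\rangle=K\langle\langle Y\rangle\rangle\oplus K\langle\langle X\rangle\rangle x_0$ and $K\langle\langle\widetilde X\rangle\rangle=K\langle\langle\widetilde Y\rangle\rangle\oplus K\langle\langle\widetilde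 X\rangle\rangle\tilde x$, $\pi_Y$ and $\pi_{\widetilde Y}$ are the projections onto the first summands. $\mathbf p$ is the linear automorphism of $K\langle\langle X\rangle\rangle$ with $\mathbf p(x_0^{k_1-1}x_{\zeta_1}x_0^{k_2-1}x_{\zeta_2}\cdots x_0^{k_r-1}x_{\zeta_r}x_0^{k_{r+1}-1})=x_0^{k_1-1}x_{\zeta_1}x_0^{k_2-1}x_{\zeta_1\zeta_2}\cdots x_0^{k_r-1}x_{\zeta_1\cdots\zeta_r}x_0^{k_{r+1}-1}$, and $\widetilde{\mathbf q}$ is the linear automorphism of $K\langle\langle\widetilde X\rangle\rangle$ with $\widetilde{\mathbf q}(\tilde x^{k_1-1}\tilde x_{\alpha_1}\cdots\tilde x^{k_r-1}\tilde x_{\alpha_r}\tilde x^{k_{r+1}-1})=\tilde x^{k_1-1}\tilde x_{\alpha_1-\alpha_2}\cdots\tilde x^{k_{r-1}-1}\tilde x_{\alpha_{r-1}-\alpha_r}\tilde x^{k_r-1}\tilde x_{\alpha_r}\tilde x^{k_{r+1}-1}$ ($r\ge0$, $k_i\ge1$). $\mathcal F:\mathbb{Q}(\mu_N)\langle\langle\widetilde X\rangle\rangle\to\mathbb{Q}(\mu_N)\langle\langle X\rangle\rangle$ is the continuous algebra isomorphism with $\tilde x\mapsto x_0$, $\tilde x_\alpha\mapsto\sum_{m=1}^N\zeta_N^{-m\iota^{-1}(\alpha)}x_{\zeta_N^m}$, and $\mathcal F_Y$ is its restriction $\mathbb{Q}(\mu_N)\langle\langle\widetilde Y\rangle\rangle\to\mathbb{Q}(\mu_N)\langle\langle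 Y\rangle\rangle$, $\tilde y_{k,\alpha}\mapsto\sum_{m=1}^N\zeta_N^{-m\iota^{-1}(\alpha)}y_{k,\zeta_N^m}$. *)

From mathcomp Require Import all_boot all_order all_algebra all_field.
Set Implicit Arguments. Unset Strict Implicit. Unset Printing Implicit Defensive.
Import Order.TTheory GRing.Theory Num.Theory.
Local Open Scope ring_scope.

(* Complex numbers: algebraic closure algC (contains Q(mu_N)). *)
(* zeta_N = exp(2 pi i / N) = (exp(pi i / N))^2, and N.-root (-1) is the
   N-th root of -1 of minimal nonnegative argument, i.e. exp(pi i / N). *)
Definition zeta (N : nat) : algC := (N.-root (-1)) ^+ 2.

Definition inQmu (N : nat) (c : algC) : Prop :=
  exists p : {poly rat}, c = (map_poly ratr p).[zeta N].

(* Alphabet X : None = x_0, Some m = x_{zeta_N^m}  (m : Z/NZ). *)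
Definition XL (N : nat) := option 'Z_N.
(* Alphabet X~ : None = x~, Some a = x~_a  (a : Z/NZ). *)
Definition XtL (N : nat) := option 'Z_N.

Definition series (L : Type) := seq L -> algC.

Definition coeffs_in_Qmu (N : nat) (L : Type) (S : series L) : Prop :=
  forall w, inQmu N (S w).

(* Linear (continuous) extension to series of a length-preserving map on
   words f : (p S) has coefficient at u equal to sum of S w over f w = u. *)
Definition lin_ext (L : finType) (f : seq L -> seq L) (S : series L)
  : series L :=
  fun u => \sum_(w : (size u).-tuple L | f w == u) S w.

Definition piY (N : nat) (S : series (XL N)) : series (XL N) :=
  fun u => if last (Some 0) u == None then 0 else S u.
Definition piYt (N : nat) (S : series (XtL N)) : series (XtL N) :=
  fun u => if last (Some 0) u == None then 0 else S u.

Definition iota_inv (N : nat) (a : 'Z_N) : nat :=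
  if val a == 0%N then N else val a.

Definition Fletter (N : nat) (a : XtL N) (b : XL N) : algC :=
  match a, b with
  | None, None => 1
  | Some al, Some m => (zeta N) ^- (iota_inv m * iota_inv al)
  | _, _ => 0
  end.

(* The continuous algebra morphism F : x~ |-> x_0,
   x~_a |-> sum_{m=1}^N zeta_N^{-m iota^{-1}(a)} x_{zeta_N^m};
   it maps words of length n to homogeneous polynomials of degree n. *)
Definition F (N : nat) (S : series (XtL N)) : series (XL N) :=
  fun u => \sum_(w : (size u).-tuple (XtL N))
             S w * \prod_(i < size u) Fletter (tnth w i) (nth None u i).

(* F_Y : restriction of F to Q(mu_N)<<Y~>> (Y-words identified with
   X-words not ending in x_0 via y_{k,z} = x_0^{k-1} x_z). *)
Definition FY (N : nat) (S : series (XtL N)) : series (XL N) := F S.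

(* Word map underlying p : x_{z_i} |-> x_{z_1 ... z_i}. *)
Fixpoint pword_acc (N : nat) (acc : 'Z_N) (w : seq (XL N)) : seq (XL N) :=
  match w with
  | [::] => [::]
  | None :: w' => None :: pword_acc acc w'
  | Some k :: w' => Some (acc + k) :: pword_acc (acc + k) w'
  end.
Definition pword (N : nat) (w : seq (XL N)) := pword_acc 0 w.
Definition p (N : nat) (S : series (XL N)) : series (XL N) :=
  lin_ext (@pword N) S.

(* Word map underlying q~ : x~_{a_i} |-> x~_{a_i - a_{i+1}} (i < r),
   x~_{a_r} unchanged. *)
Fixpoint firstA (N : nat) (w : seq (XtL N)) : 'Z_N :=
  match w with
  | [::] => 0
  | None :: w' => firstA w'
  | Some a :: _ => a
  end.
Fixpoint qword (N : nat) (w : seq (XtL N)) : seq (XtL N) :=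
  match w with
  | [::] => [::]
  | None :: w' => None :: qword w'
  | Some a :: w' => Some (a - firstA w') :: qword w'
  end.
Definition qt (N : nat) (S : series (XtL N)) : series (XtL N) :=
  lin_ext (@qword N) S.

From Stdlib Require Import FunctionalExtensionality.
From mathcomp Require Import all_boot all_order all_algebra all_field.
Import Order.TTheory GRing.Theory Num.Theory.
Set Implicit Arguments. Unset Strict Implicit. Unset Printing Implicit Defensive.
Local Open Scope ring_scope.

(* The coefficient of a word u in F(w) is the product of the letter
   coefficients Fletter w_i u_i; it vanishes unless w and u have their x_0's
   (resp. x~'s) at the same places, which gives the first identity.  For the
   second, p acts on words by a bijection and q~ by a size-preserving map, so
   both sides reduce to an identity between letter products: writing
   b_i = m_i - m_(i-1) for the increments of the exponents of u, the Abel
   summation  sum_i b_i a_i = sum_i m_i (a_i - a_(i+1))  turns the coefficient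
   of the p-preimage of u in F(w) into the coefficient of u in F(q~ w).  The
   identities hold for arbitrary coefficients and every N >= 2. *)

Section LinearExtension.

Variables (L : finType) (f : seq L -> seq L).
Hypothesis size_f : forall w, size (f w) = size w.

Lemma lin_ext_can (g : seq L -> seq L) (S : series L) u :
  cancel f g -> cancel g f -> lin_ext f S u = S (g u).
Proof.
move=> fK gK; have size_gu : size (g u) == size u by rewrite -{2}(gK u) size_f.
rewrite /lin_ext (big_pred1 (Tuple size_gu)) // => v /=.
by rewrite -val_eqE /= (can2_eq fK gK).
Qed.

Lemma sum_lin_ext n (S : series L) (K : seq L -> algC) :
  \sum_(w : n.-tuple L) S w * K (f w) =
  \sum_(v : n.-tuple L) lin_ext f S v * K v.
Proof.
under [RHS]eq_bigr => v _ do rewrite /lin_ext size_tuple big_distrl /=.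
rewrite (exchange_big_dep xpredT) //=; apply: eq_bigr => w _.
have size_fw : size (f w) == n by rewrite size_f size_tuple.
by rewrite (big_pred1 (Tuple size_fw)).
Qed.

End LinearExtension.

Section CyclotomicCharacter.

Variable N : nat.
Hypothesis N_gt1 : (1 < N)%N.

Lemma zetaN : zeta N ^+ N = 1.
Proof. by rewrite /zeta -exprM mulnC exprM rootCK ?sqrrN ?expr1n // ltnW. Qed.

Definition zeta_char (x : 'Z_N) : algC := zeta N ^- val x.

Lemma zeta_char_nat k : zeta_char k%:R = zeta N ^- k.
Proof.
rewrite /zeta_char; have -> : val (k%:R : 'Z_N) = (k %% N)%N by exact: val_Zp_nat.
by rewrite expr_mod // zetaN.
Qed.

Lemma zeta_charD x y : zeta_char (x + y) = zeta_char x * zeta_char y.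
Proof.
by rewrite -[x]natr_Zp -[y]natr_Zp -natrD !zeta_char_nat exprD invfM.
Qed.

Lemma zeta_char0 : zeta_char 0 = 1.
Proof. by rewrite /zeta_char expr0 invr1. Qed.

Lemma iota_inv_Zp (a : 'Z_N) : (iota_inv a)%:R = a.
Proof.
rewrite /iota_inv; case: eqP => [a0|_]; last exact: natr_Zp.
by apply: val_inj; rewrite /= a0 val_Zp_nat // modnn.
Qed.

Lemma Fletter_Some (a m : 'Z_N) : Fletter (Some a) (Some m) = zeta_char (m * a).
Proof. by rewrite /Fletter -zeta_char_nat natrM !iota_inv_Zp. Qed.

End CyclotomicCharacter.

Section LetterProducts.

Variable N : nat.

Fixpoint Fcoef (w u : seq (XL N)) : algC :=
  match w, u with
  | a :: w', b :: u' => Fletter a b * Fcoef w' u'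
  | _, _ => 1
  end.

Lemma prod_Fletter n (w u : seq (XL N)) : size w = n -> size u = n ->
  \prod_(i < n) Fletter (nth None w i) (nth None u i) = Fcoef w u.
Proof.
elim: n w u => [|n IH] [|a w] [|b u] //= => [_ _|[size_w] [size_u]].
- by rewrite big_ord0.
- by rewrite big_ord_recl IH.
Qed.

Lemma F_Fcoef n (S : series (XtL N)) u : size u = n ->
  F S u = \sum_(w : n.-tuple (XtL N)) S w * Fcoef w u.
Proof.
move=> size_u; subst n; apply: eq_bigr => w _; congr (_ * _).
rewrite -(@prod_Fletter (size u)) ?size_tuple //; apply: eq_bigr => i _.
by rewrite (tnth_nth None).
Qed.

Lemma Fcoef_rcons (w u : seq (XL N)) a b : size w = size u ->
  Fcoef (rcons w a) (rcons u b) = Fcoef w u * Fletter a b.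
Proof.
elim: w u => [|c w IH] [|d u] //= => [_|[size_wu]].
- by rewrite mulr1 mul1r.
- by rewrite IH // mulrA.
Qed.

Lemma Fcoef_last (w u : seq (XL N)) : size w = size u ->
  (last (Some 0) w == None) != (last (Some 0) u == None) -> Fcoef w u = 0.
Proof.
case/lastP: w => [|w a]; case/lastP: u => [|u b] //; rewrite ?size_rcons //.
move=> [size_wu]; rewrite !last_rcons Fcoef_rcons //.
by case: a => [?|]; case: b => [?|] //= _; rewrite mulr0.
Qed.

End LetterProducts.

Lemma piY_F N (S : series (XtL N)) : piY (F S) = F (piYt S).
Proof.
apply: functional_extensionality => u; rewrite /piY !(F_Fcoef _ (erefl (size u))).
have Fcoef_piYt (w : (size u).-tuple (XtL N)) :
  piYt S w * Fcoef w u = if last (Some 0) u == None then 0 else S w * Fcoef w u.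
  rewrite /piYt; case: ifP => u_end; case: ifP => w_end; rewrite ?mul0r //;
    by rewrite Fcoef_last ?mulr0 ?size_tuple // u_end w_end.
under [RHS]eq_bigr => w _ do rewrite Fcoef_piYt.
by case: ifP => _ //; rewrite big1.
Qed.

Section WordMaps.

Variable N : nat.

Fixpoint unpword_acc (acc : 'Z_N) (u : seq (XL N)) : seq (XL N) :=
  match u with
  | [::] => [::]
  | None :: u' => None :: unpword_acc acc u'
  | Some m :: u' => Some (m - acc) :: unpword_acc m u'
  end.

Definition unpword := unpword_acc 0.

Lemma size_pword (u : seq (XL N)) : size (pword u) = size u.
Proof. by rewrite /pword; elim: u 0 => [|[m|] u IH] acc //=; rewrite IH. Qed.

Lemma size_qword (w : seq (XtL N)) : size (qword w) = size w.
Proof. by elim: w => [|[a|] w IH] //=; rewrite IH. Qed.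

Lemma pwordK : cancel (@pword N) unpword.
Proof.
rewrite /pword /unpword => u; elim: u 0 => [|[m|] u IH] acc //=.
- by rewrite addrC addKr IH.
- by rewrite IH.
Qed.

Lemma unpwordK : cancel unpword (@pword N).
Proof.
rewrite /pword /unpword => u; elim: u 0 => [|[m|] u IH] acc //=.
- by rewrite addrC subrK IH.
- by rewrite IH.
Qed.

Lemma size_unpword (u : seq (XL N)) : size (unpword u) = size u.
Proof. by rewrite -{2}(unpwordK u) size_pword. Qed.

End WordMaps.

Section AbelSummation.

Variable N : nat.
Hypothesis N_gt1 : (1 < N)%N.

Arguments Fletter : simpl never.

(* acc is the exponent m_(i-1) already read from u, and the extra factor is
   the boundary term of the Abel summation. *)
Lemma Fcoef_unpword_acc acc (w u : seq (XL N)) : size w = size u ->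
  Fcoef w (unpword_acc acc u) * zeta_char (acc * firstA w) = Fcoef (qword w) u.
Proof.
elim: w u acc => [|[a|] w IH] [|[m|] u] acc //= => [_|[size_wu]|_|_|[size_wu]].
- by rewrite mulr0 zeta_char0 mulr1.
- rewrite !Fletter_Some // -(IH u m size_wu) mulrAC -zeta_charD // mulrCA.
  by rewrite -zeta_charD // mulrC mulrBl subrK mulrBr subrK.
- by rewrite /Fletter !mul0r.
- by rewrite /Fletter !mul0r.
- by rewrite /Fletter !mul1r IH.
Qed.

Lemma Fcoef_unpword (w u : seq (XL N)) : size w = size u ->
  Fcoef w (unpword u) = Fcoef (qword w) u.
Proof.
by move=> size_wu; rewrite -(Fcoef_unpword_acc 0) // mul0r zeta_char0 mulr1.
Qed.

Lemma p_F (S : series (XtL N)) : p (F S) = F (qt S).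
Proof.
apply: functional_extensionality => u.
rewrite /p (lin_ext_can (@size_pword N) _ _ (@pwordK N) (@unpwordK N)).
rewrite (F_Fcoef _ (size_unpword u)) (F_Fcoef _ (erefl (size u))).
rewrite /qt -(sum_lin_ext (@size_qword N) _ _ (fun v => Fcoef v u)).
by apply: eq_bigr => w _; rewrite Fcoef_unpword // size_tuple.
Qed.

End AbelSummation.

Theorem lemma3p3 (N : nat) (HN : (3 <= N)%N) :
  (forall S : series (XtL N), coeffs_in_Qmu N S ->
     piY (F S) = FY (piYt S)) /\
  (forall S : series (XtL N), coeffs_in_Qmu N S ->
     p (F S) = F (qt S)).
Proof.
have N_gt1 : (1 < N)%N by apply: leq_trans HN.
by split=> S _; [exact: piY_F | exact: p_F].
Qed.
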